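(* Let $k\geq 3$ be an odd integer and let $n\geq 2$. Then the integer $k$-matching preclusion number of the complete graph $K_n$ is $$mp^{k}(K_n)=\begin{cases} n-2, & n\in\{3,5\},\\ n-1, & \text{otherwise}.\end{cases}$$
   Context: All graphs are finite, simple and undirected; $\Gamma(v)$ is the set of edges incident with $v$. For a positive integer $k$, an integer $k$-matching of $G$ is a function $h:E(G)\to\{0,1,\dots,k\}$ with $\sum_{e\in\Gamma(v)}h(e)\leq k$ for all $v\in V(G)$. It is perfect if $\sum_{e\in\Gamma(v)}h(e)=k$ for every vertex $v$, and almost perfect if there is exactly one vertex $v'$ with $\sum_{e\in\Gamma(v')}h(e)=k-1$ and $\sum_{e\in\Gamma(v)}h(e)=k$ for all other vertices $v$. An edge set $F\subseteq E(G)$ is an integer $k$-matching preclusion set if $G-F$ has neither a perfect integer $k$-matching nor an almost perfect integer $k$-matching; $mp^{k}(G)$ is the minimum size of such a set. *)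

From mathcomp Require Import all_boot.
Set Implicit Arguments. Unset Strict Implicit. Unset Printing Implicit Defensive.

Record sgraph (V : finType) := SGraph {
  adj : rel V;
  adj_sym : symmetric adj;
  adj_irr : irreflexive adj }.

Definition is_edge (V : finType) (G : sgraph V) (e : {set V}) : bool :=
  [exists x, exists y, adj G x y && (e == [set x; y])].

Definition edges_del (V : finType) (G : sgraph V) (F : {set {set V}}) : {set {set V}} :=
  [set e | is_edge G e & e \notin F].

Definition hdeg (V : finType) (E : {set {set V}}) (h : {set V} -> nat) (v : V) : nat :=
  \sum_(e in E | v \in e) h e.

(* integer k-matching of the graph with edge set E: h : E -> {0..k}
   (encoded as a function on vertex sets that vanishes outside E). *)
Definition int_kmatching (V : finType) (E : {set {set V}}) (k : nat)
    (h : {set V} -> nat) : Prop :=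
  (forall e, e \notin E -> h e = 0) /\
  (forall e, h e <= k) /\
  (forall v, hdeg E h v <= k).

Definition perfect_int_kmatching (V : finType) (E : {set {set V}}) (k : nat)
    (h : {set V} -> nat) : Prop :=
  int_kmatching E k h /\ forall v, hdeg E h v = k.

Definition almost_perfect_int_kmatching (V : finType) (E : {set {set V}}) (k : nat)
    (h : {set V} -> nat) : Prop :=
  int_kmatching E k h /\
  exists v', hdeg E h v' = k.-1 /\ forall v, v != v' -> hdeg E h v = k.

Definition int_kmp_set (V : finType) (G : sgraph V) (k : nat) (F : {set {set V}}) : Prop :=
  (forall e, e \in F -> is_edge G e) /\
  ~ (exists h, perfect_int_kmatching (edges_del G F) k h) /\
  ~ (exists h, almost_perfect_int_kmatching (edges_del G F) k h).

Definition mpk_eq (V : finType) (G : sgraph V) (k m : nat) : Prop :=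
  (exists F, int_kmp_set G k F /\ #|F| = m) /\
  (forall F, int_kmp_set G k F -> m <= #|F|).

Lemma complete_sym n : symmetric (fun x y : 'I_n => x != y).
Proof. by move=> x y; rewrite eq_sym. Qed.
Lemma complete_irr n : irreflexive (fun x y : 'I_n => x != y).
Proof. by move=> x; rewrite eqxx. Qed.
Definition complete_graph (n : nat) : sgraph 'I_n :=
  SGraph (@complete_sym n) (@complete_irr n).

(* In
   a perfect or almost perfect integer k-matching every vertex has weight k,
   except possibly one with weight k - 1 > 0.  So deleting the n - 1 edges at
   a vertex precludes both; so does deleting the edges inside a vertex set S
   with #|S| = #|~: S| + 1, since double counting shows that the now
   independent S cannot receive its weight through edges into the smaller
   ~: S.  For n = 3, 5 this clique has 'C((n + 1) / 2, 2) = n - 2 edges.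

   If fewer edges ("faults") are deleted,
   a matching is built by induction on a vertex set W keeping at least two
   more vertices than faults: a "good pair" {u, v}, not deleted and hitting
   enough faults to maintain this invariant, gets weight k and leaves W.
   For even n this exhausts all vertices; for odd n it ends on a fault-free
   triangle carrying the weights (k-1)/2, (k-1)/2, (k+1)/2.  The only
   delicate configuration, 7 vertices with 5 faults, needs a good pair
   hitting three faults. *)

From mathcomp Require Import all_boot zify.
Set Implicit Arguments. Unset Strict Implicit. Unset Printing Implicit Defensive.

(* Linear arithmetic over the cardinals occurring in the goal: occurrences of
   #|A| that agree only up to conversion (e.g. in their finType instance) are
   first abstracted by a common variable, so that lia sees them as one atom.
   Hypotheses about cardinals must be moved into the goal beforehand. *)
Ltac card_lia :=
  repeat match goal with
  | |- context [@card.body ?T ?A] =>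
      let c := fresh "c" in set c := @card.body T A; clearbody c
  end; lia.

Section FiniteSets.
Variable T : finType.
Implicit Types (A S e : {set T}) (a b c : T).

Lemma pair_meets_le e S :
  #|e| = 2 -> ~~ (e \subset S) -> #|e :&: S| <= #|e :&: ~: S|.
Proof.
move=> e2 eS; have := cardsID S e; rewrite setDE e2.
suff : #|e :&: S| < 2 by lia.
rewrite -e2 proper_card // properEneq subsetIl andbT.
by apply: contraNneq eS => <-; apply: subsetIr.
Qed.

Lemma mem_card_le2 A a b c :
  #|A| <= 2 -> a \in A -> b \in A -> a != b -> c \in A -> (c == a) || (c == b).
Proof.
move=> A2 aA bA ab cA; apply: contraTT A2 => /norP [ca cb]; rewrite -ltnNge.
by apply/card_gt2P; exists a, b, c; split; split; rewrite // eq_sym.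
Qed.

Lemma set2_inj a : {in [set~ a] &, injective (fun v => [set a; v])}.
Proof.
move=> v w; rewrite !inE => va _ eq_vw; have := set22 a v; rewrite eq_vw.
by case/set2P => // av; rewrite av eqxx in va.
Qed.

Lemma exists_card_set m : m <= #|T| -> exists S : {set T}, #|S| = m.
Proof.
elim: m => [|m IH] m_lt; first by exists set0; rewrite cards0.
have [S cardS] := IH (ltnW m_lt).
have /set0Pn [x] : ~: S != set0.
  by move: (cardsC S) cardS m_lt; rewrite -card_gt0; card_lia.
by rewrite inE => xS; exists (x |: S); rewrite cardsU1 xS cardS.
Qed.

End FiniteSets.

Section VertexWeights.
Variable V : finType.
Implicit Types (E : {set {set V}}) (h : {set V} -> nat) (A a : {set V}).

Lemma sum_hdeg E h A :
  \sum_(v in A) hdeg E h v = \sum_(e in E) h e * #|e :&: A|.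
Proof.
rewrite /hdeg (exchange_big_dep (mem E)) /=; last by move=> v e _ /andP [].
apply: eq_bigr => e eE; rewrite mulnC -sum_nat_const.
by apply: eq_bigl => v; rewrite !inE eE andbC.
Qed.

Lemma weight_le_hdeg E h e v : e \in E -> v \in e -> h e <= hdeg E h v.
Proof. by move=> eE ve; rewrite /hdeg (bigD1 e) ?eE ?ve //= leq_addr. Qed.

Definition edge_weight a (c : nat) : {set V} -> nat := fun e => (e == a) * c.

Lemma hdegD E h1 h2 v :
  hdeg E (fun e => h1 e + h2 e) v = hdeg E h1 v + hdeg E h2 v.
Proof. exact: big_split. Qed.

Lemma hdeg_edge_weight E a c v :
  a \in E -> hdeg E (edge_weight a c) v = (v \in a) * c.
Proof.
move=> aE; rewrite /hdeg /edge_weight.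
have [va | nva] := boolP (v \in a).
  rewrite (bigD1 a) ?aE ?va //= eqxx big1 ?addn0 // => e /andP [_ /negbTE ->].
  by rewrite mul0n.
rewrite mul0n big1 // => e /andP [_ ve]; case: eqP ve => [-> | _ _].
  by rewrite (negbTE nva).
by rewrite mul0n.
Qed.

End VertexWeights.

Section Obstructions.
Variables (V : finType) (E : {set {set V}}) (k : nat).

(* Vertex weights of a perfect or almost perfect integer k-matching: every
   vertex gets at most k, and all but possibly v' get exactly k. *)
Definition near_kfactor (h : {set V} -> nat) (v' : V) : Prop :=
  forall v, hdeg E h v <= k <= hdeg E h v + (v == v').

Lemma preclusion_of_no_near_kfactor (v0 : V) :
  0 < k -> (forall h v', ~ near_kfactor h v') ->
  ~ (exists h, perfect_int_kmatching E k h) /\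
  ~ (exists h, almost_perfect_int_kmatching E k h).
Proof.
move=> k_gt0 noNear; split.
  move=> [h [_ hk]]; apply: (noNear h v0) => v.
  by rewrite hk leqnn leq_addr.
move=> [h [[_ [_ hle]] [v' [hv' hk]]]]; apply: (noNear h v') => v.
rewrite hle /=; have [-> | /hk ->] := eqVneq v v'; last by rewrite addn0.
by rewrite hv' addn1 prednK.
Qed.

(* A vertex lying on no edge receives weight 0 < k - 1. *)
Lemma isolated_no_near_kfactor x0 :
  1 < k -> (forall e, e \in E -> x0 \notin e) ->
  forall h v', ~ near_kfactor h v'.
Proof.
move=> k_gt1 iso h v' /(_ x0) /andP [_].
rewrite /hdeg big_pred0 => [|e]; last by apply/negbTE/andP => -[/iso/negP].
by rewrite add0n; case: (x0 == v'); lia.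
Qed.

(* An independent set S with one vertex more than its complement: its
   vertices need weight at least k * #|S| - 1, but every edge at S spends at
   least as much on the complement, which absorbs at most k * #|~: S|. *)
Lemma independent_no_near_kfactor (S : {set V}) :
  1 < k -> #|S| = #|~: S| + 1 ->
  (forall e, e \in E -> #|e| = 2 /\ ~~ (e \subset S)) ->
  forall h v', ~ near_kfactor h v'.
Proof.
move=> k_gt1 cardS indep h v' near.
have inside : \sum_(v in S) hdeg E h v <= \sum_(v in ~: S) hdeg E h v.
  rewrite !sum_hdeg; apply: leq_sum => e /indep [e2 eS].
  by rewrite leq_mul2l pair_meets_le ?orbT.
have outside : \sum_(v in ~: S) hdeg E h v <= #|~: S| * k.
  by rewrite -sum_nat_const; apply: leq_sum => v _; case/andP: (near v).
have demand : #|S| * k <= \sum_(v in S) hdeg E h v + 1.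
  rewrite -sum_nat_const.
  apply: (@leq_trans (\sum_(v in S) (hdeg E h v + (v == v')))).
    by apply: leq_sum => v _; case/andP: (near v).
  rewrite big_split leq_add2l /=.
  have [v'S | v'S] := boolP (v' \in S).
    by rewrite (bigD1 v') //= eqxx big1 // => v /andP [_ /negbTE ->].
  by rewrite big1 // => v vS; case: eqP vS => // ->; rewrite (negbTE v'S).
move: inside outside demand; rewrite cardS; nia.
Qed.

End Obstructions.

Lemma is_edge_complete n (e : {set 'I_n}) :
  is_edge (complete_graph n) e = (#|e| == 2).
Proof.
apply/existsP/cards2P => [[x /existsP [y /andP [xy /eqP ->]]] | [x [y [xy ->]]]].
  by exists x, y.
by exists x; apply/existsP; exists y; rewrite /= xy eqxx.
Qed.

Lemma mem_edges_del_complete n (F : {set {set 'I_n}}) e :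
  e \in edges_del (complete_graph n) F = (#|e| == 2) && (e \notin F).
Proof. by rewrite inE is_edge_complete. Qed.

Definition star n (x0 : 'I_n) : {set {set 'I_n}} :=
  [set [set x0; y] | y in [set~ x0]].

Lemma star_preclusion n k (x0 : 'I_n) : 1 < k ->
  int_kmp_set (complete_graph n) k (star x0) /\ #|star x0| = n - 1.
Proof.
move=> k_gt1; split; last first.
  by rewrite card_in_imset ?cardsC1 ?card_ord ?subn1 //; apply: set2_inj.
split.
  move=> e /imsetP [y]; rewrite !inE => yx0 ->.
  by rewrite is_edge_complete cards2 [x0 == y]eq_sym yx0.
apply: (preclusion_of_no_near_kfactor x0) => //; first exact: ltnW.
apply: (isolated_no_near_kfactor (x0 := x0)) => // e.
rewrite mem_edges_del_complete => /andP [/cards2P [x [y [xy ->]]]].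
move=> notF; apply/negP => /set2P [ex0 | ey0]; apply/(negP notF)/imsetP.
  by exists y; rewrite ex0 // !inE eq_sym.
by exists x; rewrite ey0 ?inE 1?setUC.
Qed.

Definition clique n (S : {set 'I_n}) : {set {set 'I_n}} :=
  [set e : {set 'I_n} | e \subset S & #|e| == 2].

Lemma clique_preclusion n k (S : {set 'I_n}) : 1 < k ->
  #|S| = #|~: S| + 1 ->
  int_kmp_set (complete_graph n) k (clique S) /\ #|clique S| = 'C(#|S|, 2).
Proof.
move=> k_gt1 cardS; split; last exact: cards_draws.
have [x0 x0S] : {x0 | x0 \in S} by apply/sigW/set0Pn; rewrite -card_gt0 cardS addn1.
split; first by move=> e; rewrite inE is_edge_complete => /andP [].
apply: (preclusion_of_no_near_kfactor x0) => //; first exact: ltnW.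
apply: (independent_no_near_kfactor (S := S)) => // e.
by rewrite mem_edges_del_complete inE => /andP [/eqP ->]; rewrite eqxx andbT.
Qed.

Lemma odd_clique_preclusion n k : 1 < k -> odd n ->
  exists F, int_kmp_set (complete_graph n) k F /\ #|F| = 'C(n./2.+1, 2).
Proof.
move=> k_gt1 n_odd.
have [S cardS] : exists S : {set 'I_n}, #|S| = n./2.+1.
  by apply: exists_card_set; rewrite card_ord; move: (odd_double_half n); lia.
exists (clique S); rewrite -cardS; apply: clique_preclusion => //.
by move: (cardsC S) (odd_double_half n); rewrite card_ord cardS n_odd; card_lia.
Qed.

Section LowerBound.
Variables (n : nat) (F : {set {set 'I_n}}).
Hypothesis F_pairs : forall e, e \in F -> #|e| = 2.
Implicit Types (W : {set 'I_n}) (a u v x y : 'I_n).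

Definition faults_in W := [set e in F | e \subset W].
Definition faults_at W x := [set e in faults_in W | x \in e].
Definition faults_touching W u v := [set e in faults_in W | (u \in e) || (v \in e)].

Lemma mem_faults_at W x e : (e \in faults_at W x) = (e \in faults_in W) && (x \in e).
Proof. by rewrite inE. Qed.

Lemma mem_faults_touching W u v e :
  (e \in faults_touching W u v) = (e \in faults_in W) && ((u \in e) || (v \in e)).
Proof. by rewrite inE. Qed.

Lemma mem_faults_in W x y :
  x \in W -> y \in W -> ([set x; y] \in faults_in W) = ([set x; y] \in F).
Proof.
move=> xW yW; rewrite inE andb_idr // => _.
by apply/subsetP => z /set2P [] ->.
Qed.

Lemma faults_inE W e :
  e \in faults_in W -> exists x y, [/\ x != y, x \in W, y \in W & e = [set x; y]].
Proof.
rewrite inE => /andP [/F_pairs/eqP/cards2P [x [y [xy ->]]] sW].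
by exists x, y; split; rewrite // (subsetP sW) ?set21 ?set22.
Qed.

Lemma faults_atE W x e :
  e \in faults_at W x -> exists2 y, y \in W :\ x & e = [set x; y].
Proof.
rewrite mem_faults_at => /andP [/faults_inE [p [q [pq pW qW ->]]]] /set2P [] ->.
  by exists q; rewrite // !inE eq_sym pq.
by exists p; rewrite 1?setUC // !inE pq.
Qed.

Lemma faults_at_gt1 W x e1 e2 :
  e1 \in faults_in W -> e2 \in faults_in W -> e1 != e2 -> x \in e1 -> x \in e2 ->
  1 < #|faults_at W x|.
Proof.
move=> e1F e2F e12 xe1 xe2; apply/card_gt1P; exists e1, e2.
by rewrite !mem_faults_at e1F e2F xe1 xe2.
Qed.

Lemma card_faults_remove W u v :
  #|faults_in (W :\ u :\ v)| + #|faults_touching W u v| = #|faults_in W|.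
Proof.
rewrite -(cardsID (faults_touching W u v) (faults_in W)) addnC.
congr (_ + _); apply: eq_card => e; rewrite !inE ?subsetD1.
  by case: (e \in F) (e \subset W) (u \in e) (v \in e) => [] [] [] [].
by case: (e \in F) (e \subset W) (u \in e) (v \in e) => [] [] [] [].
Qed.

Lemma sum_card_faults_at W :
  \sum_(x in W) #|faults_at W x| = 2 * #|faults_in W|.
Proof.
have -> : \sum_(x in W) #|faults_at W x| =
          \sum_(x in W) hdeg (faults_in W) (fun=> 1) x.
  by apply: eq_bigr => x _; rewrite /hdeg sum1dep_card.
rewrite sum_hdeg mulnC -sum_nat_const; apply: eq_bigr => e.
by rewrite inE => /andP [/F_pairs e2 /setIidPl ->]; rewrite e2.
Qed.

Definition good_pair W m u v :=
  [/\ u \in W, v \in W, u != v, [set u; v] \notin F &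
      m <= #|faults_touching W u v|].

Lemma good_pair_remove W m u v : good_pair W m u v ->
  #|W :\ u :\ v| + 2 = #|W| /\ #|faults_in (W :\ u :\ v)| + m <= #|faults_in W|.
Proof.
case=> uW vW uv _ m_le; split.
  rewrite [RHS](cardsD1 u) uW (cardsD1 v (W :\ u)) !inE vW eq_sym uv /=.
  by card_lia.
by move: (card_faults_remove W u v) m_le; card_lia.
Qed.

(* With few faults, every vertex a of W has a partner v in W with {a, v}
   not deleted, since a has fewer than #|W| - 1 faults; the pair then
   removes all faults at a. *)
Lemma good_pair_at W m a :
  a \in W -> #|faults_in W| + 2 <= #|W| -> m <= #|faults_at W a| ->
  exists u v, good_pair W m u v.
Proof.
move=> aW few m_le.
have : ~~ ([set [set a; v] | v in W :\ a] \subset faults_in W).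
  apply: contraTN few => /subset_leq_card; rewrite -ltnNge.
  rewrite card_in_imset; last first.
    by apply: sub_in2 (@set2_inj _ a) => v; rewrite !inE => /andP [].
  by rewrite (cardsD1 a W) aW add1n addn2 !ltnS.
case/subsetPn => _ /imsetP [v vWa ->].
have /andP [va vW] : (v != a) && (v \in W) by rewrite -in_setD1.
rewrite mem_faults_in // => avF; exists a, v; split; rewrite 1?[a == v]eq_sym //.
apply: (leq_trans m_le); apply: subset_leq_card; apply/subsetP => e.
by rewrite !inE => /andP [-> ->].
Qed.

(* When every vertex carries at most one fault, two distinct faults {a, _}
   and {c, _} are disjoint, {a, c} is not deleted and hits both. *)
Lemma disjoint_faults_good_pair W e1 e2 :
  (forall x, x \in W -> #|faults_at W x| <= 1) ->
  e1 \in faults_in W -> e2 \in faults_in W -> e1 != e2 ->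
  exists u v, good_pair W 2 u v.
Proof.
move=> le1 e1F e2F e12.
have [a [b [_ aW _ e1E]]] := faults_inE e1F.
have [c [d [_ cW _ e2E]]] := faults_inE e2F.
have ae1 : a \in e1 by rewrite e1E set21.
have ce2 : c \in e2 by rewrite e2E set21.
have ce1 : c \notin e1.
  apply/negP => ce1; have := faults_at_gt1 e1F e2F e12 ce1 ce2.
  by rewrite ltnNge le1.
have acF : [set a; c] \notin F.
  apply/negP => acF; have acW : [set a; c] \in faults_in W by rewrite mem_faults_in.
  have e1ac : e1 != [set a; c] by apply: contraNneq ce1 => ->; rewrite set22.
  by have := faults_at_gt1 e1F acW e1ac ae1 (set21 a c); rewrite ltnNge le1.
exists a, c; split=> //; first by apply: contraNneq ce1 => <-.
apply/card_gt1P; exists e1, e2.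
by rewrite !mem_faults_touching e1F e2F ae1 ce2 orbT.
Qed.

(* While W keeps two more vertices than faults, some good pair removes
   min(2, #faults) faults: either a vertex carries that many faults, or
   there are two faults and all faults are disjoint. *)
Lemma exists_good_pair W :
  #|faults_in W| + 2 <= #|W| ->
  exists u v, good_pair W (minn 2 #|faults_in W|) u v.
Proof.
move=> few.
have [/existsP [a /andP [aW big]] | /existsPn small] :=
  boolP [exists a in W, minn 2 #|faults_in W| <= #|faults_at W a|].
  exact: good_pair_at aW few big.
have {}small x : x \in W -> #|faults_at W x| < minn 2 #|faults_in W|.
  by move=> xW; have := small x; rewrite xW ltnNge.
have le1 x : x \in W -> #|faults_at W x| <= 1.
  by move=> xW; rewrite -ltnS (leq_trans (small x xW)) ?geq_minl.
have [x0 x0W] : exists x0, x0 \in W.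
  by apply/set0Pn; rewrite -card_gt0 (leq_trans _ few) // addn2.
have [e0 e0F] : exists e0, e0 \in faults_in W.
  apply/set0Pn; rewrite -card_gt0.
  exact: leq_ltn_trans (leq0n _) (leq_trans (small x0 x0W) (geq_minr _ _)).
have [a [b [_ aW _ e0E]]] := faults_inE e0F.
have : 0 < #|faults_at W a|.
  by apply/card_gt0P; exists e0; rewrite mem_faults_at e0F e0E set21.
move/leq_ltn_trans/(_ (small a aW)); rewrite leq_min => /andP [_].
case/card_gt1P => e1 [e2 [e1F e2F e12]].
have [u [v [uW vW uv uvF two]]] := disjoint_faults_good_pair le1 e1F e2F e12.
by exists u, v; split; rewrite ?(leq_trans (geq_minl _ _)).
Qed.

(* If no vertex carries three faults, double counting gives a vertex x with
   exactly two faults {x, y1}, {x, y2}; one of the three faults away from x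
   differs from {y1, y2}, hence has a vertex v outside {x, y1, y2}, and the
   non-deleted pair {x, v} hits three faults. *)
Lemma exists_good_pair7 W :
  #|W| = 7 -> #|faults_in W| = 5 -> exists u v, good_pair W 3 u v.
Proof.
move=> W7 F5.
have few : #|faults_in W| + 2 <= #|W| by rewrite W7 F5.
have [/existsP [a /andP [aW big]] | /existsPn small] :=
  boolP [exists a in W, 3 <= #|faults_at W a|].
  exact: good_pair_at aW few big.
have [x xW x_gt1] : exists2 x, x \in W & 1 < #|faults_at W x|.
  apply/exists_inP; apply: contraT; rewrite negb_exists_in => /forall_inP le1.
  have : \sum_(y in W) #|faults_at W y| <= \sum_(y in W) 1.
    by apply: leq_sum => y yW; rewrite leqNgt le1.
  by rewrite sum1_card sum_card_faults_at F5 W7.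
have x_le2 : #|faults_at W x| <= 2 by move: (small x); rewrite xW /= -leqNgt.
have [e1 [e2 [e1x e2x e12]]] := card_gt1P x_gt1.
have [y1 _ e1E] := faults_atE e1x; have [y2 _ e2E] := faults_atE e2x.
have [e [eF xe ey]] :
    exists e, [/\ e \in faults_in W, x \notin e & e != [set y1; y2]].
  have sub : faults_at W x \subset faults_in W.
    by apply/subsetP => f; rewrite mem_faults_at => /andP [].
  have : 1 < #|faults_in W :\: faults_at W x|.
    have x_eq2 : #|faults_at W x| = 2 by apply/eqP; rewrite eqn_leq x_le2 x_gt1.
    move: (cardsID (faults_at W x) (faults_in W)) x_eq2 F5.
    by rewrite (setIidPr sub); card_lia.
  have away f : f \in faults_in W :\: faults_at W x -> f \in faults_in W /\ x \notin f.
    by move=> /setDP [fF]; rewrite mem_faults_at fF.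
  case/card_gt1P => f1 [f2 [/away [f1F xf1] /away [f2F xf2] f12]].
  have [f1y | f1y] := eqVneq f1 [set y1; y2]; last by exists f1.
  by exists f2; rewrite -f1y eq_sym.
have [v ve vy] : exists2 v, v \in e & v \notin [set y1; y2].
  apply/subsetPn; apply: contra ey => ey.
  have /faults_inE [p [q [pq _ _ eE]]] := eF.
  by rewrite eqEcard ey eE !cards2 pq; case: (y1 != y2).
have vW : v \in W by have := eF; rewrite inE => /andP [_ /subsetP]; apply.
have vx : v != x by apply: contraNneq xe => <-.
have xvF : [set x; v] \notin F.
  apply/negP => xvF; have xv_at : [set x; v] \in faults_at W x.
    by rewrite mem_faults_at mem_faults_in // xvF set21.
  case/orP: (mem_card_le2 x_le2 e1x e2x e12 xv_at) => /eqP xvE;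
    have := set22 x v; rewrite xvE ?e1E ?e2E => /set2P [/eqP | vy'];
    rewrite ?(negbTE vx) //; by move: vy; rewrite vy' !inE eqxx ?orbT.
exists x, v; split; rewrite 1?eq_sym //.
move: e1x e2x; rewrite !mem_faults_at => /andP [e1F xe1] /andP [e2F xe2].
apply/card_gt2P; exists e1, e2, e.
rewrite !mem_faults_touching e1F e2F eF xe1 xe2 ve orbT.
by do 2!split=> //; [apply: contraNneq xe => <- | apply: contraNneq xe => ->].
Qed.

Variable k : nat.
Local Notation E := (edges_del (complete_graph n) F).

Definition partial_kfactor W (d : 'I_n -> nat) (h : {set 'I_n} -> nat) : Prop :=
  (forall e, h e != 0 -> (e \in E) && (e \subset W)) /\
  (forall v, hdeg E h v = (v \in W) * k - d v).

Lemma partial_kfactor_extend W d h u v :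
  u \in W -> v \in W -> u != v -> [set u; v] \notin F -> d u = 0 -> d v = 0 ->
  partial_kfactor (W :\ u :\ v) d h ->
  partial_kfactor W d (fun e => h e + edge_weight [set u; v] k e).
Proof.
move=> uW vW uv uvF du dv [supp hdegW].
have uvE : [set u; v] \in E by rewrite mem_edges_del_complete cards2 uv.
split=> [e | w].
  rewrite /edge_weight; have [-> _ | _] := eqVneq e [set u; v].
    by rewrite uvE; apply/subsetP => w /set2P [] ->.
  rewrite mul0n addn0 => /supp /andP [-> /subset_trans]; apply.
  by apply/subsetP => w; rewrite !inE => /and3P [].
rewrite hdegD hdeg_edge_weight // hdegW !inE.
have [-> | wu] := eqVneq w u; first by rewrite du uW andbF /=; lia.
have [-> | wv] := eqVneq w v; first by rewrite dv vW /=; lia.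
by rewrite /= addn0.
Qed.

Lemma partial_kfactor_triangle a b c :
  odd k -> a != b -> a != c -> b != c ->
  [set a; b] \notin F -> [set a; c] \notin F -> [set b; c] \notin F ->
  exists h, partial_kfactor [set a; b; c] (fun v => v == a) h.
Proof.
move=> k_odd ab ac bc abF acF bcF; set j := k./2.
have kE : k = j + j + 1 by rewrite -[LHS](odd_double_half k) k_odd -addnn addnC.
have pairE x y : x != y -> [set x; y] \notin F -> [set x; y] \in E.
  by move=> xy xyF; rewrite mem_edges_del_complete cards2 xy.
have pairW x y : x \in [set a; b; c] -> y \in [set a; b; c] ->
    [set x; y] \subset [set a; b; c].
  by move=> xW yW; apply/subsetP => z /set2P [] ->.
exists (fun e => edge_weight [set a; b] j e + edge_weight [set a; c] j e +
                 edge_weight [set b; c] j.+1 e).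
split=> [e | w].
  rewrite /edge_weight.
  have [-> _ | _] := eqVneq e [set a; b]; first by rewrite pairE ?pairW ?inE ?eqxx ?orbT.
  have [-> _ | _] := eqVneq e [set a; c]; first by rewrite pairE ?pairW ?inE ?eqxx ?orbT.
  have [-> _ | _] := eqVneq e [set b; c]; first by rewrite pairE ?pairW ?inE ?eqxx ?orbT.
  by [].
rewrite !hdegD !hdeg_edge_weight ?pairE // !inE.
have [-> | wa] := eqVneq w a; first by rewrite (negbTE ab) (negbTE ac) /=; lia.
have [-> | wb] := eqVneq w b; first by rewrite (negbTE bc) /=; lia.
have [_ | wc] := eqVneq w c; first by rewrite /=; lia.
by rewrite /= !mul0n.
Qed.

Lemma even_partial_kfactor j W :
  #|W| = 2 * j -> j = 0 \/ #|faults_in W| + 2 <= #|W| ->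
  exists h, partial_kfactor W (fun=> 0) h.
Proof.
elim: j W => [|j IH] W Wj few.
  exists (fun=> 0); split=> [e | v]; first by rewrite eqxx.
  have -> : W = set0 by apply/cards0_eq.
  by rewrite /hdeg big1 // inE.
have {}few : #|faults_in W| + 2 <= #|W| by case: few.
have [u [v gp]] := exists_good_pair few.
have [cardW' faultsW'] := good_pair_remove gp.
case: gp => uW vW uv uvF _.
have [h hW'] : exists h, partial_kfactor (W :\ u :\ v) (fun=> 0) h.
  by apply: IH; move: cardW' faultsW' Wj few; card_lia.
by exists (fun e => h e + edge_weight [set u; v] k e); apply: partial_kfactor_extend.
Qed.

Lemma odd_partial_kfactor_base W :
  odd k -> #|W| = 3 -> faults_in W = set0 ->
  exists h a, a \in W /\ partial_kfactor W (fun v => v == a) h.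
Proof.
move=> k_odd W3 noF.
have /card_gt2P [a [b [c [[aW bW cW] [ab bc ca]]]]] : 2 < #|W| by rewrite W3.
have WE : W = [set a; b; c].
  apply/eqP; rewrite eq_sym eqEcard; apply/andP; split.
    by apply/subsetP => x; rewrite !inE -orbA => /or3P [] /eqP ->.
  by rewrite W3; apply/card_gt2P; exists a, b, c; rewrite !inE !eqxx ?orbT.
have nF x y : x \in W -> y \in W -> [set x; y] \notin F.
  by move=> xW yW; rewrite -(mem_faults_in xW yW) noF inE.
rewrite eq_sym in ca.
have [h ?] := partial_kfactor_triangle k_odd ab ca bc
                (nF _ _ aW bW) (nF _ _ aW cW) (nF _ _ bW cW).
by exists h, a; rewrite WE !inE eqxx.
Qed.

(* Odd case: good pairs reduce W to a fault-free triangle; seven vertices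
   with five faults need the stronger good pair removing three. *)
Lemma odd_partial_kfactor j W :
  odd k -> #|W| = 2 * j + 3 -> #|faults_in W| + 2 <= #|W| ->
  7 <= #|W| \/ #|faults_in W| + 3 <= #|W| ->
  exists h a, a \in W /\ partial_kfactor W (fun v => v == a) h.
Proof.
move=> k_odd; elim: j W => [|j IH] W Wj few few3.
  apply: odd_partial_kfactor_base => //.
  by apply/cards0_eq; move: Wj few3; card_lia.
have [m [u [v [gp [m_ge m_ge3]]]]] : exists m u v, good_pair W m u v /\
    minn 2 #|faults_in W| <= m /\ (#|W| = 7 -> #|faults_in W| = 5 -> 3 <= m).
  have [/andP [/eqP W7 /eqP F5] | not75] :=
    boolP ((#|W| == 7) && (#|faults_in W| == 5)).
    by exists 3; have [u [v ?]] := exists_good_pair7 W7 F5; exists u, v; rewrite F5.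
  exists (minn 2 #|faults_in W|); have [u [v ?]] := exists_good_pair few.
  by exists u, v; do 2!split=> //; move=> W7 F5; rewrite W7 F5 in not75.
have [cardW' faultsW'] := good_pair_remove gp.
case: gp => uW vW uv uvF _.
have [h [a [aW' hW']]] : exists h a, a \in W :\ u :\ v /\
    partial_kfactor (W :\ u :\ v) (fun w => w == a) h.
  by apply: IH; move: cardW' faultsW' Wj few few3 m_ge m_ge3; card_lia.
move: aW'; rewrite !inE => /and3P [av au aW].
exists (fun e => h e + edge_weight [set u; v] k e), a; split=> //.
by apply: partial_kfactor_extend; rewrite // eq_sym ?(negbTE au) ?(negbTE av).
Qed.

(* A partial k-factor is an integer k-matching: each edge weight is bounded
   by the weight of an endpoint, which is at most k. *)
Lemma int_kmatching_of_partial_kfactor W d h :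
  partial_kfactor W d h -> int_kmatching E k h.
Proof.
case=> supp hdegW.
have hdeg_le v : hdeg E h v <= k.
  by rewrite hdegW (leq_trans (leq_subr _ _)) //; case: (v \in W); rewrite ?mul1n.
split; last split=> // e.
  by move=> e eE; apply/eqP; apply: contraNT eE => /supp /andP [].
have [-> // | /supp /andP [eE _]] := eqVneq (h e) 0.
have /set0Pn [v ve] : e != set0.
  by move: eE; rewrite mem_edges_del_complete -card_gt0 => /andP [/eqP ->].
exact: leq_trans (weight_le_hdeg h eE ve) (hdeg_le v).
Qed.

Lemma perfect_of_partial_kfactor h :
  partial_kfactor setT (fun=> 0) h -> perfect_int_kmatching E k h.
Proof.
move=> hT; split; first exact: int_kmatching_of_partial_kfactor hT.
by move=> v; case: hT => _ ->; rewrite inE mul1n subn0.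
Qed.

Lemma almost_perfect_of_partial_kfactor h a :
  partial_kfactor setT (fun v => v == a) h -> almost_perfect_int_kmatching E k h.
Proof.
move=> hT; split; first exact: int_kmatching_of_partial_kfactor hT.
case: hT => _ hdegT; exists a; split; first by rewrite hdegT inE mul1n eqxx subn1.
by move=> v /negbTE va; rewrite hdegT inE mul1n va subn0.
Qed.

Lemma faults_in_setT : faults_in setT = F.
Proof. by apply/setP => e; rewrite inE subsetT andbT. Qed.

Lemma perfect_kmatching_exists :
  ~~ odd n -> #|F| + 2 <= n -> exists h, perfect_int_kmatching E k h.
Proof.
move=> n_even few.
have [h hT] : exists h, partial_kfactor setT (fun=> 0) h.
  apply: (@even_partial_kfactor n./2).
    by rewrite cardsT card_ord -{1}(odd_double_half n) (negbTE n_even) -mul2n.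
  by right; rewrite faults_in_setT cardsT card_ord.
by exists h; apply: perfect_of_partial_kfactor.
Qed.

Lemma almost_perfect_kmatching_exists :
  odd k -> odd n -> #|F| + 2 <= n -> 7 <= n \/ #|F| + 3 <= n ->
  exists h, almost_perfect_int_kmatching E k h.
Proof.
move=> k_odd n_odd few few3.
have [h [a [_ hT]]] :
    exists h a, a \in setT /\ partial_kfactor setT (fun v => v == a) h.
  apply: (@odd_partial_kfactor n./2.-1) => //;
    rewrite ?faults_in_setT cardsT card_ord //.
  by move: (odd_double_half n) few; rewrite n_odd -mul2n; lia.
by exists h; apply: almost_perfect_of_partial_kfactor hT.
Qed.

End LowerBound.

Theorem theorem3p7 (k n : nat) :
  3 <= k -> odd k -> 2 <= n ->
  mpk_eq (complete_graph n) k
    (if (n == 3) || (n == 5) then n - 2 else n - 1).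
Proof.
move=> k_ge3 k_odd n_ge2; have k_gt1 : 1 < k := ltnW k_ge3.
split.
  case: ifP => [n35 | _].
    by case/orP: n35 => /eqP ->; apply: odd_clique_preclusion.
  by exists (star (Ordinal (ltnW n_ge2))); apply: star_preclusion.
move=> F [F_edges [noP noA]]; rewrite leqNgt; apply/negP => small.
have F_pairs e : e \in F -> #|e| = 2.
  by move/F_edges; rewrite is_edge_complete => /eqP.
have [n_odd | n_even] := boolP (odd n).
  apply: noA; apply: almost_perfect_kmatching_exists => //;
  move: small (odd_double_half n); rewrite n_odd;
  by case: ifP => [/orP [] /eqP ? | /norP [/eqP ? /eqP ?]]; card_lia.
apply: noP; apply: perfect_kmatching_exists => //.
move: small (odd_double_half n); rewrite (negbTE n_even).
by case: ifP => [/orP [] /eqP ? | _]; card_lia.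
Qed.
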